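(* For every $m\ge2$, the weight-$m$ part of the first Lie algebra homology of $\Lambda_1(\mathbb{Q}\mathrm{Tree}_2)$ is nonzero: $H_1(\Lambda_1(\mathbb{Q}\mathrm{Tree}_2))_{(m)}\neq0$. Equivalently, $\mathbb{Q}\mathrm{Tree}_2((m+1))$ is not contained in the derived subalgebra $[\Lambda_1(\mathbb{Q}\mathrm{Tree}_2),\Lambda_1(\mathbb{Q}\mathrm{Tree}_2)]$.
   Context: $\mathrm{Tree}_2((m))$, $m\ge1$, is the set of planar binary rooted trees with one root and $m$ leaves labeled $1,\dots,m$ from left to right (each internal vertex has exactly two inputs), equivalently full parenthesizations of $12\cdots m$; $\mathrm{Tree}_2((1))=\{1\}$. Composition $S\circ_iT$ grafts the root of $T$ onto the $i$-th leaf of $S$. Let $\Lambda_1(\mathbb{Q}\mathrm{Tree}_2)=\bigoplus_{m\ge2}\mathbb{Q}\mathrm{Tree}_2((m))$ with Lie bracket $[c,d]=\sum_{t=1}^{j}d\circ_tc-\sum_{s=1}^{k}c\circ_sd$ for $c\in\mathrm{Tree}_2((k))$, $d\in\mathrm{Tree}_2((j))$, extended bilinearly. Give $\mathbb{Q}\mathrm{Tree}_2((m))$ weight $m-1$ (the eigenvalue of the adjoint action of the unit tree); the Chevalley–Eilenberg chain complex decomposes by total weight, and $H_1(\cdot)_{(m)}$ denotes the weight-$m$ part of $H_1$, i.e. of the abelianization $\Lambda_1/[\Lambda_1,\Lambda_1]$. *)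

From HB Require Import structures.
From mathcomp Require Import all_boot all_order all_algebra.
Set Implicit Arguments. Unset Strict Implicit. Unset Printing Implicit Defensive.
Import Order.TTheory GRing.Theory Num.Theory.
Local Open Scope ring_scope.

(* Planar binary rooted trees; leaves are labeled 1..m left to right
   implicitly by their position. *)
Inductive tree : Type := Leaf | Node of tree & tree.

Fixpoint tree_eqb (s t : tree) : bool :=
  match s, t with
  | Leaf, Leaf => true
  | Node s1 s2, Node t1 t2 => tree_eqb s1 t1 && tree_eqb s2 t2
  | _, _ => false
  end.

Lemma tree_eqP : Equality.axiom tree_eqb.
Proof.
elim=> [|s1 IH1 s2 IH2] [|t1 t2] /=; try by constructor.
case: (IH1 t1) => [->|ne]; last by constructor; case.
case: (IH2 t2) => [->|ne]; last by constructor; case.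
by constructor.
Qed.

HB.instance Definition _ := hasDecEq.Build tree tree_eqP.

Fixpoint nleaves (t : tree) : nat :=
  match t with Leaf => 1%N | Node l r => (nleaves l + nleaves r)%N end.

(* graft S i T : grafts the root of T onto the leaf of S at 0-based
   position i; so  S \circ_i T  (1-based i) is  graft S (i-1) T. *)
Fixpoint graft (S : tree) (i : nat) (T : tree) : tree :=
  match S with
  | Leaf => if i == 0%N then T else Leaf
  | Node l r => if (i < nleaves l)%N then Node (graft l i T) r
                else Node l (graft r (i - nleaves l) T)
  end.

Definition comp (S : tree) (i : nat) (T : tree) : tree := graft S i.-1 T.

(* Formal Q-linear combinations of trees. *)
Definition fsum := seq (rat * tree).

Definition coef (v : fsum) (t : tree) : rat :=
  \sum_(p <- v) (if p.2 == t then p.1 else 0).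

(* v lies in Lambda_1(Q Tree_2) = (+)_{m>=2} Q Tree_2((m)) *)
Definition in_Lambda1 (v : fsum) : bool := all (fun p => 2 <= nleaves p.2)%N v.

Definition bracket_tree (c d : tree) : fsum :=
  [seq (1, comp d t c) | t <- iota 1 (nleaves d)] ++
  [seq (-1, comp c s d) | s <- iota 1 (nleaves c)].

Definition bracket (x y : fsum) : fsum :=
  flatten [seq flatten [seq [seq (p.1 * q.1 * e.1, e.2) | e <- bracket_tree p.2 q.2]
                        | q <- y] | p <- x].

Definition in_derived (v : fsum) : Prop :=
  exists xs : seq (fsum * fsum),
    all (fun xy => in_Lambda1 xy.1 && in_Lambda1 xy.2) xs /\
    forall t, coef v t = coef (flatten [seq bracket xy.1 xy.2 | xy <- xs]) t.

(* The right comb with m+1 leaves never occurs in a bracket of trees with at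
   least two leaves, except in the two "outermost" graftings: d o_j c, grafting
   c onto the last leaf of d, and c o_k d.  Both are the comb exactly when c and
   d are combs, and they come with opposite signs.  Hence the coefficient of the
   comb is a linear functional vanishing on [Lambda_1, Lambda_1], and the comb
   itself lies outside the derived subalgebra. *)

From Pilot Require Import Defs.
From mathcomp Require Import all_boot all_order all_algebra.
From mathcomp Require Import zify.
Import GRing.Theory.

Fixpoint is_rcomb (t : tree) : bool :=
  if t is Node l r then (l == Leaf) && is_rcomb r else true.

Fixpoint rcomb (n : nat) : tree :=
  if n is n.+1 then Node Leaf (rcomb n) else Leaf.

Lemma nleaves_gt0 t : (0 < nleaves t)%N.
Proof. by elim: t => //= l IHl r _; rewrite addn_gt0 IHl. Qed.

Lemma nleaves_rcomb n : nleaves (rcomb n) = n.+1.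
Proof. by elim: n => //= n ->. Qed.

Lemma eq_rcomb t n : (t == rcomb n) = is_rcomb t && (nleaves t == n.+1).
Proof.
elim: t n => [|l _ r IHr] [|n] //=.
  have := nleaves_gt0 l; have := nleaves_gt0 r => ? ?.
  by apply/esym/negbTE/negP => /andP[_ /eqP]; lia.
case: (l =P Leaf) => [->|Hl] /=; first by rewrite -IHr.
by apply/eqP => -[/Hl].
Qed.

Lemma nleaves_graft d i c : (i < nleaves d)%N ->
  nleaves (graft d i c) = (nleaves d + nleaves c).-1.
Proof.
have := nleaves_gt0 c.
elim: d i => [|l IHl r IHr] i /= Hc; first by case: i.
have := nleaves_gt0 l; have := nleaves_gt0 r => ? ? Hi.
case: ifP => Hli /=; first by rewrite IHl //; lia.
by rewrite IHr //; lia.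
Qed.

Lemma is_rcomb_graft d i c : (1 < nleaves c)%N -> (i < nleaves d)%N ->
  is_rcomb (graft d i c) = [&& is_rcomb d, is_rcomb c & i == (nleaves d).-1].
Proof.
move=> Hc; elim: d i => [|l IHl r IHr] i /=; first by case: i => //; rewrite andbT.
have := nleaves_gt0 l; have := nleaves_gt0 r => ? ? Hi.
case: ifP => Hli /=.
  have -> : (graft l i c == Leaf) = false.
    by apply/negP => /eqP E; move: (nleaves_graft l i c Hli); rewrite E /=; lia.
  case: (l =P Leaf) => //= El; move: Hli; rewrite El /= => ?.
  have /negbTE -> : i != (0 + nleaves r)%N by lia.
  by rewrite !andbF.
rewrite IHr; last by lia.
by case: (l == Leaf); rewrite //= !andbA; congr (_ && _); apply/eqP/eqP; lia.
Qed.

Local Open Scope ring_scope.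

Lemma coef_cat a b t : coef (a ++ b) t = coef a t + coef b t.
Proof. by rewrite /coef big_cat. Qed.

Lemma coef_flatten ss t : coef (flatten ss) t = \sum_(s <- ss) coef s t.
Proof.
elim: ss => [|s ss IH] /=; first by rewrite big_nil /coef big_nil.
by rewrite big_cons coef_cat IH.
Qed.

Lemma coef_scale a s t : coef [seq (a * e.1, e.2) | e <- s] t = a * coef s t.
Proof.
rewrite /coef big_map mulr_sumr; apply: eq_bigr => e _ /=.
by case: ifP; rewrite ?mulr0.
Qed.

(* Only the grafting onto the last leaf of d can produce a comb. *)
Lemma count_comp_rcomb m d c : (1 < nleaves c)%N ->
  \sum_(t <- iota 1 (nleaves d)) (if Defs.comp d t c == rcomb m then 1 else 0 : rat)
  = if [&& is_rcomb d, is_rcomb c & nleaves d + nleaves c == m.+2]%N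
    then 1 else 0.
Proof.
move=> Hc; have := nleaves_gt0 d.
case Ed: (nleaves d) => [|j] // _.
rewrite -[j.+1]addn1 iotaD big_cat /= big_seq1 big_seq big1 ?add0r.
  rewrite /Defs.comp eq_rcomb is_rcomb_graft ?nleaves_graft ?Ed ?addn1 //= eqxx andbT.
  by rewrite addSn eqSS andbA.
move=> t; rewrite mem_iota => /andP[t_ge1 t_lt].
rewrite /Defs.comp eq_rcomb is_rcomb_graft //; last by rewrite Ed; lia.
have /negbTE -> : t.-1 != (nleaves d).-1 by rewrite Ed; lia.
by rewrite !andbF.
Qed.

Lemma coef_bracket_tree_rcomb m c d : (1 < nleaves c)%N -> (1 < nleaves d)%N ->
  coef (bracket_tree c d) (rcomb m) = 0.
Proof.
move=> Hc Hd; rewrite /bracket_tree coef_cat /coef !big_map /=.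
have signE b : (if b then -1 else 0 : rat) = - (if b then 1 else 0).
  by case: b; rewrite ?oppr0.
under [X in _ + X]eq_bigr do rewrite signE.
rewrite sumrN count_comp_rcomb // count_comp_rcomb // addnC.
by case: (is_rcomb c); case: (is_rcomb d); rewrite /= ?subrr ?oppr0 ?addr0.
Qed.

Lemma coef_bracket_rcomb m x y : in_Lambda1 x -> in_Lambda1 y ->
  coef (bracket x y) (rcomb m) = 0.
Proof.
move=> /allP Hx /allP Hy; rewrite /bracket coef_flatten big_map big_seq big1 // => p xp.
rewrite coef_flatten big_map big_seq big1 // => q yq.
by rewrite coef_scale coef_bracket_tree_rcomb ?mulr0 //; [apply: Hx | apply: Hy].
Qed.

Lemma coef_derived_rcomb m v : in_derived v -> coef v (rcomb m) = 0.
Proof.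
case=> xs [/allP Hxs ->]; rewrite coef_flatten big_map big_seq big1 // => xy /Hxs.
by case/andP; apply: coef_bracket_rcomb.
Qed.

Theorem lemma5p2 (m : nat) (hm : (2 <= m)%N) :
  exists v : fsum,
    all (fun p => nleaves p.2 == m.+1) v /\ ~ in_derived v.
Proof.
exists [:: (1, rcomb m)]; split; first by rewrite /= nleaves_rcomb eqxx.
move=> /(coef_derived_rcomb m)/eqP.
by rewrite /coef big_seq1 eqxx oner_eq0.
Qed.
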